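(* Let $\mathcal{A}\in\mathcal{T}'_7$ with $c_{13}^4=c_{14}^5=c_{15}^6=c_{24}^5=c_{25}^6=c_{14}^6=c_{24}^6=c_{13}^6=0$ and $c_{13}^5c_{35}^6c_{46}^7\ne0$. Then the automorphisms of $\mathcal{A}$ are exactly the linear maps $\varphi$ with $\varphi(e_1)=e_1+a_{71}e_7$, $\varphi(e_2)=e_2+a_{72}e_7$, $\varphi(e_i)=e_i$ for $3\le i\le7$, where $a_{71},a_{72}\in\mathbb{C}$.
   Context: Over $\mathbb{C}$, basis $e_1,\dots,e_n$, $e_ie_j=\sum_kc_{ij}^ke_k$. For $n\ge3$, $\mathcal{T}'_n$ is the family of anticommutative algebra structures with $c_{ij}^k=0$ whenever $k\le\max\{i,j\}$ and $e_ie_{i+1}=e_{i+2}$ for $1\le i\le n-2$, other structure constants arbitrary subject to these and anticommutativity. *)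

From HB Require Import structures.
From mathcomp Require Import all_boot all_order all_algebra.
From mathcomp Require Import complex.
From mathcomp Require Import Rstruct.
Set Implicit Arguments. Unset Strict Implicit. Unset Printing Implicit Defensive.
Import Order.TTheory GRing.Theory Num.Theory.
Local Open Scope ring_scope.

Notation CC := (complex Rdefinitions.R).

(* Structure constants of an n-dimensional algebra with basis e_1..e_n,
   stored 0-indexed: c i j k is the coefficient of e_(k+1) in e_(i+1) e_(j+1). *)
Definition sconst (n : nat) := 'I_n -> 'I_n -> 'I_n -> CC.

(* 1-indexed access: C_ c i j k = c_{ij}^k *)
Definition C_ (n : nat) (c : sconst n.+1) (i j k : nat) : CC :=
  c (inord i.-1) (inord j.-1) (inord k.-1).

Definition in_Tprime (n : nat) (c : sconst n) : Prop :=
  [/\ (forall i j k, c i j k = - c j i k),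
      (forall i j k : 'I_n, (k <= maxn i j)%N -> c i j k = 0) &
      (forall i j k : 'I_n, nat_of_ord j = i.+1 -> c i j k = (nat_of_ord k == i.+2)%:R)].

Definition algmul (n : nat) (c : sconst n) (x y : 'cV[CC]_n) : 'cV[CC]_n :=
  \col_k \sum_i \sum_j x i 0 * y j 0 * c i j k.

(* A linear map phi, given by its matrix A (phi(e_j) = column j of A),
   is an automorphism: bijective and multiplicative. *)
Definition is_automorphism (n : nat) (c : sconst n) (A : 'M[CC]_n) : Prop :=
  A \in unitmx /\
  forall x y : 'cV[CC]_n, A *m algmul c x y = algmul c (A *m x) (A *m y).

From HB Require Import structures.
From mathcomp Require Import all_boot all_order all_algebra.
From mathcomp Require Import complex Rstruct zify.
Import Order.TTheory GRing.Theory Num.Theory.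
Local Open Scope ring_scope.
Set Implicit Arguments. Unset Strict Implicit.

(* Since e_k = e_(k-2) e_(k-1), any
      multiplicative phi preserves the filtration span(e_k, ..., e_n), k >= 3, i.e. A is
      lower triangular outside its upper-left 2x2 block; if moreover A is invertible its
      corner entry A n n is nonzero.  Conversely every "shear"
      e_1 |-> e_1 + a1 e_n, e_2 |-> e_2 + a2 e_n, e_i |-> e_i is an automorphism.
   2. For n = 7 with the eight vanishing constants of the theorem, the structure
      constants are the explicit [table] below (twelve free parameters).  The automorphism
      equations are evaluated symbolically on this sparse table, and solved in a fixed
      order using c_13^5 c_35^6 c_46^7 != 0 and A 7 7 != 0: A is the identity except in
      the entries (7,1) and (7,2), i.e. A is a shear. *)

Section Tprime.
Variables (n : nat) (c : sconst n).
Hypothesis cT : in_Tprime c.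

(* Anticommutativity in characteristic zero: e_i e_i = 0. *)
Lemma Tprime_sqr (i k : 'I_n) : c i i k = 0.
Proof.
case: cT => anti _ _; apply/eqP; have /eqP := anti i i k.
by rewrite -subr_eq0 opprK -mulr2n -mulr_natr mulf_eq0 pnatr_eq0 orbF.
Qed.

Lemma Tprime_low (i j k : 'I_n) : (k <= 1)%N -> c i j k = 0.
Proof.
case: cT => _ low _ hk; case: (eqVneq i j) => [->|hij]; first exact: Tprime_sqr.
apply: low; apply: (leq_trans hk); rewrite leq_max.
by case: i j hij => [[|i] hi] [[|j] hj].
Qed.

Lemma Tprime_last_l (i j k : 'I_n) : (n <= i.+1)%N -> c i j k = 0.
Proof.
by case: cT => _ low _ hi; apply: low; have := ltn_ord k; lia.
Qed.

Lemma Tprime_last_r (i j k : 'I_n) : (n <= j.+1)%N -> c i j k = 0.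
Proof.
by case: cT => _ low _ hj; apply: low; have := ltn_ord k; lia.
Qed.

End Tprime.

Section Automorphism.
Variables (n : nat) (c : sconst n) (A : 'M[CC]_n).
Hypothesis cT : in_Tprime c.
Hypothesis A_mul :
  forall x y : 'cV[CC]_n, A *m algmul c x y = algmul c (A *m x) (A *m y).

Lemma sum_delta (F : 'I_n -> CC) (i : 'I_n) :
  \sum_u (delta_mx i (0 : 'I_1) u 0 * F u) = F i.
Proof.
rewrite (bigD1 i) //= big1 => [|u /negbTE hu]; first by rewrite mxE !eqxx mul1r addr0.
by rewrite mxE hu mul0r.
Qed.

Lemma algmul_delta (i j : 'I_n) :
  algmul c (delta_mx i 0) (delta_mx j 0) = \col_k c i j k.
Proof.
apply/matrixP => k l; rewrite !mxE -[RHS](sum_delta (fun u => c u j k)).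
apply: eq_bigr => u _; rewrite -[in RHS](sum_delta (fun v => c u v k)) mulr_sumr.
by apply: eq_bigr => v _; rewrite mulrA.
Qed.

Lemma automorphism_coord (i j m : 'I_n) :
  \sum_k A m k * c i j k = \sum_u \sum_v A u i * A v j * c u v m.
Proof.
have /matrixP/(_ m 0) := A_mul (delta_mx i 0) (delta_mx j 0).
rewrite -!colE algmul_delta !mxE => e.
rewrite (eq_bigr (fun k => A m k * (\col_k c i j k) k 0)) => [|k _]; last by rewrite mxE.
rewrite e; apply: eq_bigr => u _; apply: eq_bigr => v _; by rewrite !mxE.
Qed.

(* Since e_i e_(i+1) = e_(i+2), the left side above picks a single entry. *)
Lemma consecutive_coord (i j k m : 'I_n) :
  val j = i.+1 -> val k = i.+2 -> \sum_l A m l * c i j l = A m k.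
Proof.
case: cT => _ _ cons ij ik; rewrite (bigD1 k) //= cons // ik eqxx mulr1.
rewrite big1 ?addr0 // => l hl; rewrite cons // -ik.
by move: hl; rewrite -val_eqE => /negbTE ->; rewrite mulr0.
Qed.

(* phi preserves the filtration span(e_k, ..., e_n), k >= 3: these are the powers of the
   algebra, since e_k = e_(k-2) e_(k-1) and products raise the index. *)
Lemma automorphism_triangular (m k : 'I_n) : (2 <= k)%N -> (m < k)%N -> A m k = 0.
Proof.
have [K] := ubnP (nat_of_ord k); elim: K m k => // K IH m k hkK hk hmk.
have hi : (k - 2 < n)%N by have := ltn_ord k; lia.
have hj : (k - 1 < n)%N by have := ltn_ord k; lia.
rewrite -(consecutive_coord (i := Ordinal hi) (j := Ordinal hj) (k := k) m) /=; try lia.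
rewrite automorphism_coord; apply: big1 => u _; apply: big1 => v _.
case: cT => _ low _.
have [hmax|] := leqP m (maxn u v); first by rewrite low // mulr0.
rewrite gtn_max => /andP[um vm].
have [->|huv] := eqVneq u v; first by rewrite Tprime_sqr // mulr0.
have {}huv : nat_of_ord u != nat_of_ord v by [].
rewrite (IH v (Ordinal hj)) /= ?mulr0 ?mul0r //; lia.
Qed.

End Automorphism.

Section Shear.
Variables (n : nat) (c : sconst n.+3).
Hypothesis cT : in_Tprime c.

Definition shear (a1 a2 : CC) : 'M[CC]_n.+3 :=
  1%:M + a1 *: delta_mx ord_max (inord 0) + a2 *: delta_mx ord_max (inord 1).

Lemma delta_mulmx (i j : 'I_n.+3) (v : 'cV[CC]_n.+3) :
  delta_mx i j *m v = v j 0 *: delta_mx i 0.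
Proof.
apply/matrixP => r l; rewrite !mxE (bigD1 j) //= big1 => [|k /negbTE hk].
  by rewrite !mxE eqxx andbT [l]ord1 eqxx andbT addr0 mulrC.
by rewrite mxE hk andbF mul0r.
Qed.

Lemma shear_mulmx (a1 a2 : CC) (v : 'cV[CC]_n.+3) :
  shear a1 a2 *m v = v + (a1 * v (inord 0) 0 + a2 * v (inord 1) 0) *: delta_mx ord_max 0.
Proof.
by rewrite !mulmxDl mul1mx -!scalemxAl !delta_mulmx !scalerA -addrA scalerDl.
Qed.

Lemma algmul_low (x y : 'cV[CC]_n.+3) (k : 'I_n.+3) : (k <= 1)%N -> algmul c x y k 0 = 0.
Proof.
move=> hk; rewrite mxE big1 // => i _; rewrite big1 // => j _.
by rewrite Tprime_low // mulr0.
Qed.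

Lemma algmul_shift (x y : 'cV[CC]_n.+3) (s t : CC) :
  algmul c (x + s *: delta_mx ord_max 0) (y + t *: delta_mx ord_max 0) = algmul c x y.
Proof.
apply/matrixP => k l; rewrite !mxE; apply: eq_bigr => i _; apply: eq_bigr => j _.
have [->|hi] := eqVneq i ord_max; first by rewrite Tprime_last_l // !mulr0.
have [->|hj] := eqVneq j ord_max; first by rewrite Tprime_last_r // !mulr0.
by rewrite !mxE (negbTE hi) (negbTE hj) /= !mulr0 !addr0.
Qed.

Lemma shear_automorphism (a1 a2 : CC) : is_automorphism c (shear a1 a2).
Proof.
have ord_max_neq (k : nat) : (k <= 1)%N -> (inord k : 'I_n.+3) != ord_max.
  by move=> hk; rewrite -val_eqE /= inordK; lia.
split.
  pose N : 'M[CC]_n.+3 := a1 *: delta_mx ord_max (inord 0) + a2 *: delta_mx ord_max (inord 1).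
  have NN : N *m N = 0.
    rewrite /N mulmxDl !mulmxDr -!scalemxAl -!scalemxAr !mul_delta_mx_0 ?ord_max_neq //.
    by rewrite !scaler0 !addr0.
  apply: (proj1 (mulmx1_unit (B := 1%:M - N) _)).
  by rewrite /shear -addrA -/N mulmxDl mul1mx mulmxBr mulmx1 NN subr0 subrK.
move=> x y; rewrite !shear_mulmx !algmul_low ?inordK //.
by rewrite !mulr0 addr0 scale0r addr0 algmul_shift.
Qed.

End Shear.
Arguments shear {n}.

Lemma shear_of_entries (n : nat) (A : 'M[CC]_n.+3) :
  (forall m k : 'I_n.+3, (2 <= k)%N || (m != ord_max) -> A m k = (m == k)%:R) ->
  A = shear (A ord_max (inord 0)) (A ord_max (inord 1)).
Proof.
move=> HA; apply/matrixP => m k; rewrite !mxE.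
have [->|hm] := eqVneq m ord_max; last by rewrite HA ?hm ?orbT //= !mulr0 !addr0.
have [hk|] := leqP 2 k.
  have hk0 : (k == inord 0) = false by rewrite -val_eqE /= inordK //; lia.
  have hk1 : (k == inord 1) = false by rewrite -val_eqE /= inordK //; lia.
  by rewrite HA ?hk // hk0 hk1 !andbF !mulr0 !addr0.
have h01 (j : nat) : (j <= 1)%N -> (ord_max == inord j :> 'I_n.+3) = false.
  by move=> hj; rewrite -val_eqE /= inordK; lia.
have h10 : (inord 1 == inord 0 :> 'I_n.+3) = false by rewrite -val_eqE /= !inordK.
move=> hk; have [->|->] : k = inord 0 \/ k = inord 1.
- by case: k hk => [[|[|k]] hk] //= _; [left|right]; apply/val_inj; rewrite /= inordK.
- by rewrite h01 // eqxx eq_sym h10 /= mulr1 mulr0 add0r addr0.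
- by rewrite h01 // eqxx h10 /= mulr1 mulr0 !add0r.
Qed.

Lemma unitmx_corner (n : nat) (A : 'M[CC]_n.+1) : A \in unitmx ->
  (forall m : 'I_n.+1, m != ord_max -> A m ord_max = 0) -> A ord_max ord_max != 0.
Proof.
move=> Au Hcol; apply/eqP => Hcorner.
have : A *m (delta_mx ord_max 0 : 'cV_n.+1) = 0.
  rewrite -colE; apply/matrixP => m l; rewrite !mxE.
  by have [->|/Hcol] := eqVneq m ord_max.
move/(congr1 (mulmx (invmx A))); rewrite mulKmx // mulmx0.
by move/matrixP/(_ ord_max 0); rewrite !mxE !eqxx /= => /eqP; rewrite oner_eq0.
Qed.

Section SevenDim.
Variable R : fieldType.

(* To evaluate the 7^3 automorphism equations symbolically, a structure constant is
   recorded as a tag: 0, 1, -1 or a free parameter.  Zero terms of a sum over such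
   tags then disappear by mere computation ([cbv]), before any rewriting. *)
Inductive sparse_coef := SZero | SOne | SMinusOne | SParam of R.

Definition coef_val (t : sparse_coef) : R :=
  match t with SZero => 0 | SOne => 1 | SMinusOne => -1 | SParam x => x end.

Definition add_term (x : R) (t : sparse_coef) (r : R) : R :=
  match t with
  | SZero => r | SOne => x + r | SMinusOne => - x + r | SParam y => x * y + r
  end.

Lemma add_termE (x : R) (t : sparse_coef) (r : R) : x * coef_val t + r = add_term x t r.
Proof. by case: t => [|||y] /=; rewrite ?mulr0 ?add0r ?mulr1 ?mulrN1. Qed.

Definition table (g : nat -> nat -> nat -> R) (i j k : nat) : sparse_coef :=
  match i, j, k with
  | 0,1,2 | 1,2,3 | 2,3,4 | 3,4,5 | 4,5,6 => SOne
  | 1,0,2 | 2,1,3 | 3,2,4 | 4,3,5 | 5,4,6 => SMinusOne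
  | 0,2,4 => SParam (g 0 2 4) | 2,0,4 => SParam (- g 0 2 4)
  | 0,2,6 => SParam (g 0 2 6) | 2,0,6 => SParam (- g 0 2 6)
  | 0,3,6 => SParam (g 0 3 6) | 3,0,6 => SParam (- g 0 3 6)
  | 0,4,6 => SParam (g 0 4 6) | 4,0,6 => SParam (- g 0 4 6)
  | 0,5,6 => SParam (g 0 5 6) | 5,0,6 => SParam (- g 0 5 6)
  | 1,3,6 => SParam (g 1 3 6) | 3,1,6 => SParam (- g 1 3 6)
  | 1,4,6 => SParam (g 1 4 6) | 4,1,6 => SParam (- g 1 4 6)
  | 1,5,6 => SParam (g 1 5 6) | 5,1,6 => SParam (- g 1 5 6)
  | 2,4,5 => SParam (g 2 4 5) | 4,2,5 => SParam (- g 2 4 5)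
  | 2,4,6 => SParam (g 2 4 6) | 4,2,6 => SParam (- g 2 4 6)
  | 2,5,6 => SParam (g 2 5 6) | 5,2,6 => SParam (- g 2 5 6)
  | 3,5,6 => SParam (g 3 5 6) | 5,3,6 => SParam (- g 3 5 6)
  | _,_,_ => SZero
  end%N.

Definition sparse_sum (l : seq (nat * nat)) (F : nat -> nat -> R)
    (T : nat -> nat -> sparse_coef) : R :=
  foldr (fun p r => add_term (F p.1 p.2) (T p.1 p.2) r) 0 l.

Lemma sparse_sumE (l : seq (nat * nat)) (F : nat -> nat -> R)
    (T : nat -> nat -> sparse_coef) : sparse_sum l F T = \sum_(p <- l) F p.1 p.2 * coef_val (T p.1 p.2).
Proof. by elim: l => [|p l IH]; rewrite ?big_nil ?big_cons //= IH add_termE. Qed.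

Definition single7 : seq (nat * nat) := [seq (0%N, k) | k <- iota 0 7].
Definition pairs7 : seq (nat * nat) := [seq (u, v) | u <- iota 0 7, v <- iota 0 7].

Lemma sum_ord7 (F : nat -> R) : \sum_(k < 7) F k = \sum_(k <- iota 0 7) F k.
Proof. by rewrite -(big_mkord xpredT) /index_iota subn0. Qed.

Lemma sparse_single7 (F : nat -> R) (T : nat -> sparse_coef) :
  \sum_(k < 7) F k * coef_val (T k) = sparse_sum single7 (fun _ k => F k) (fun _ k => T k).
Proof. by rewrite sparse_sumE (sum_ord7 (fun k => F k * coef_val (T k))) big_map. Qed.

Lemma sparse_pairs7 (F : nat -> nat -> R) (T : nat -> nat -> sparse_coef) :
  \sum_(u < 7) \sum_(v < 7) F u v * coef_val (T u v) = sparse_sum pairs7 F T.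
Proof.
rewrite sparse_sumE big_allpairs (sum_ord7 (fun u => \sum_(v < 7) F u v * coef_val (T u v))).
by apply: eq_bigr => u _; rewrite (sum_ord7 (fun v => F u v * coef_val (T u v))).
Qed.

Lemma table_spec (g : nat -> nat -> nat -> R)
  (anti : forall i j k, (i < 7)%N -> (j < 7)%N -> (k < 7)%N -> g i j k = - g j i k)
  (sqr : forall i k, g i i k = 0)
  (low : forall i j k, (i < 7)%N -> (j < 7)%N -> (k < 7)%N -> (k <= maxn i j)%N -> g i j k = 0)
  (cons : forall i k, (i.+1 < 7)%N -> (k < 7)%N -> g i i.+1 k = (k == i.+2)%:R)
  (v1 : g 0 2 3 = 0) (v2 : g 0 3 4 = 0) (v3 : g 0 4 5 = 0) (v4 : g 1 3 4 = 0)
  (v5 : g 1 4 5 = 0) (v6 : g 0 3 5 = 0) (v7 : g 1 3 5 = 0) (v8 : g 0 2 5 = 0) :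
  forall i j k, (i < 7)%N -> (j < 7)%N -> (k < 7)%N -> g i j k = coef_val (table g i j k).
Proof.
do 3![do 7?[case=> [|]]; try (move=> *; exfalso; lia)];
move=> _ _ _; rewrite /coef_val /table /=;
first [ done
      | by apply: low
      | by rewrite cons //= ?mulr1n ?mulr0n
      | by rewrite anti // cons //= ?mulr1n ?mulr0n ?oppr0
      | by rewrite anti
      | by rewrite ?v1 ?v2 ?v3 ?v4 ?v5 ?v6 ?v7 ?v8
      | by rewrite anti // ?v1 ?v2 ?v3 ?v4 ?v5 ?v6 ?v7 ?v8 ?oppr0 ].
Qed.

Section Equations.
Variables (g : nat -> nat -> nat -> R) (a : nat -> nat -> R).

Hypothesis aut_eq : forall i j m, (i < 7)%N -> (j < 7)%N -> (m < 7)%N ->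
  sparse_sum single7 (fun _ k => a m k) (fun _ k => table g i j k)
  = sparse_sum pairs7 (fun u v => a u i * a v j) (fun u v => table g u v m).
(* phi preserves the filtration by the powers of the algebra. *)
Hypothesis a_triangular : forall m k, [&& 2 <= k, k < 7 & m < k]%N -> a m k = 0.
Hypothesis params_nz : g 0 2 4 * g 2 4 5 * g 3 5 6 != 0.
Hypothesis corner_nz : a 6 6 != 0.

Ltac known_entries e :=
  repeat match goal with
  | H : a ?m ?k = 0 |- _ => match type of e with context [a m k] => rewrite H in e end
  | H : a ?m ?k = 1 |- _ => match type of e with context [a m k] => rewrite H in e end
  | H : forall k : nat, is_true (leq (S k) 7) -> a k k = 1 |- _ =>
      match type of e with context [a ?k _] => rewrite (@H k isT) in e end
  | |- _ => match type of e with context [a ?m ?k] => rewrite (@a_triangular m k isT) in e end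
  end.

Ltac expand i j m :=
  let e := fresh "e" in
  have e := @aut_eq i j m isT isT isT;
  cbv beta iota zeta delta [sparse_sum single7 pairs7 allpairs_dep iota foldr map
                            flatten cat add_term table fst snd] in e;
  known_entries e;
  rewrite ?(mulr0, mul0r, addr0, add0r, mulr1, mul1r, oppr0, opprK, mulrN, mulNr,
            subr0, sub0r) in e;
  revert e.

(* phi(e_(i+2)) = phi(e_i) phi(e_(i+1)) gives a multiplicative recursion on the diagonal. *)
Lemma diagonal_recurrence :
  [/\ a 2 2 = a 0 0 * a 1 1 - a 1 0 * a 0 1, a 3 3 = a 1 1 * a 2 2,
      a 4 4 = a 2 2 * a 3 3, a 5 5 = a 3 3 * a 4 4 & a 6 6 = a 4 4 * a 5 5].
Proof.
by split; [expand 0%N 1%N 2%N | expand 1%N 2%N 3%N | expand 2%N 3%N 4%N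
          | expand 3%N 4%N 5%N | expand 4%N 5%N 6%N].
Qed.

Lemma mulf_neq0_l (u v : R) : u * v != 0 -> u != 0.
Proof. by rewrite mulf_eq0 negb_or => /andP[]. Qed.
Lemma mulf_neq0_r (u v : R) : u * v != 0 -> v != 0.
Proof. by rewrite mulf_eq0 negb_or => /andP[]. Qed.

(* As a 6 6 is the product of the earlier diagonal entries, none of them vanishes. *)
Lemma diagonal_nonzero :
  [/\ a 1 1 != 0, a 2 2 != 0, a 3 3 != 0, a 4 4 != 0 & a 5 5 != 0].
Proof.
have [_ d33 d44 d55 d66] := diagonal_recurrence.
have n44 : a 4 4 != 0 by move: corner_nz; rewrite d66 => /mulf_neq0_l.
have n55 : a 5 5 != 0 by move: corner_nz; rewrite d66 => /mulf_neq0_r.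
have n33 : a 3 3 != 0 by move: n55; rewrite d55 => /mulf_neq0_l.
have n22 : a 2 2 != 0 by move: n44; rewrite d44 => /mulf_neq0_l.
by split=> //; move: n33; rewrite d33 => /mulf_neq0_l.
Qed.

Lemma factor_eq0 {x u : R} : u != 0 -> 0 = x * u -> x = 0.
Proof. by move=> nz /esym/eqP; rewrite mulf_eq0 (negbTE nz) orbF => /eqP. Qed.

Lemma factorN_eq0 {x u : R} : u != 0 -> 0 = - (x * u) -> x = 0.
Proof. by move=> nz /eqP; rewrite eq_sym oppr_eq0 eq_sym => /eqP; apply: factor_eq0. Qed.

Lemma factor_eq1 {x u : R} : u != 0 -> x * u = u -> x = 1.
Proof. by move=> nz; rewrite -{2}[u]mul1r => /(mulIf nz). Qed.

Lemma sub_eq0 (x y : R) : x = x - y -> y = 0.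
Proof. by move/eqP; rewrite -subr_eq0 opprB addrC subrK => /eqP. Qed.

Let n024 : g 0 2 4 != 0. Proof. by move: params_nz => /mulf_neq0_l/mulf_neq0_l. Qed.
Let n245 : g 2 4 5 != 0. Proof. by move: params_nz => /mulf_neq0_l/mulf_neq0_r. Qed.
Let n356 : g 3 5 6 != 0. Proof. by move: params_nz => /mulf_neq0_r. Qed.

Lemma vanish_near_diagonal : [/\ a 1 0 = 0, a 2 0 = 0, a 2 1 = 0 & a 3 2 = 0].
Proof.
have [n11 n22 n33 n44 n55] := diagonal_nonzero.
have z10 : a 1 0 = 0 by expand 0%N 2%N 3%N; apply: factor_eq0.
have z20 : a 2 0 = 0 by expand 0%N 3%N 4%N; apply: factor_eq0.
have z21 : a 2 1 = 0 by expand 1%N 3%N 4%N; apply: factor_eq0.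
by split=> //; expand 0%N 1%N 3%N.
Qed.

(* Comparing the e_6-coefficients of phi(e_3 e_5) = c_35^6 phi(e_6) forces a 1 1 = 1. *)
Lemma a11_eq1 : a 1 1 = 1.
Proof.
have [_ d33 _ d55 _] := diagonal_recurrence.
have [n11 n22 n33 n44 n55] := diagonal_nonzero.
have [z10 z20 z21 z32] := vanish_near_diagonal.
apply: (factor_eq1 (mulf_neq0 (mulf_neq0 n22 n44) n245)).
by expand 2%N 4%N 5%N; rewrite d55 d33 !mulrA.
Qed.

Lemma vanish_columns12 : [/\ a 3 0 = 0, a 3 1 = 0, a 4 0 = 0, a 4 1 = 0 & a 4 2 = 0].
Proof.
have [n11 n22 n33 n44 n55] := diagonal_nonzero.
have [z10 z20 z21 z32] := vanish_near_diagonal.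
have o11 := a11_eq1.
have z30 : a 3 0 = 0 by expand 0%N 4%N 5%N; apply: factor_eq0.
have z31 : a 3 1 = 0 by expand 1%N 4%N 5%N; apply: factor_eq0.
have z40 : a 4 0 = 0 by expand 0%N 3%N 5%N; apply: factorN_eq0.
have z41 : a 4 1 = 0 by expand 1%N 3%N 5%N; apply: factorN_eq0.
by split=> //; expand 0%N 1%N 4%N.
Qed.

(* Using c_13^5 and c_35^6: A_{6,5} = 0, hence A_{5,4} = 0, hence A_{1,2} = 0. *)
Lemma vanish_via_c135 : [/\ a 5 4 = 0, a 4 3 = 0 & a 0 1 = 0].
Proof.
have [n11 n22 n33 n44 n55] := diagonal_nonzero.
have [z10 z20 z21 z32] := vanish_near_diagonal.
have o11 := a11_eq1.
have [z30 z31 z40 z41 z42] := vanish_columns12.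
have z54 : a 5 4 = 0 by expand 0%N 2%N 5%N => /esym; apply: factor_eq0.
have z43 : a 4 3 = 0.
  by expand 2%N 3%N 5%N; rewrite mulrAC mulrC; apply: (factor_eq0 (mulf_neq0 n22 n245)).
by split=> //; expand 1%N 2%N 4%N; rewrite -mulrA; apply: (factor_eq0 (mulf_neq0 n22 n024)).
Qed.

(* The whole diagonal is 1: first a 2 2 = 1 via c_46^7, then the recursion. *)
Lemma diagonal_one : forall k, (k < 7)%N -> a k k = 1.
Proof.
have [d22 d33 d44 d55 d66] := diagonal_recurrence.
have [n11 n22 n33 n44 n55] := diagonal_nonzero.
have [z10 z20 z21 z32] := vanish_near_diagonal.
have o11 := a11_eq1.
have [z54 z43 z01] := vanish_via_c135.
have o22 : a 2 2 = 1.
  apply: (factor_eq1 (mulf_neq0 (mulf_neq0 n33 n55) n356)).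
  by expand 3%N 5%N 6%N; rewrite d66 d44 !mulrA.
have o33 : a 3 3 = 1 by rewrite d33 o11 o22 mulr1.
have o44 : a 4 4 = 1 by rewrite d44 o22 o33 mulr1.
have o55 : a 5 5 = 1 by rewrite d55 o33 o44 mulr1.
have o66 : a 6 6 = 1 by rewrite d66 o44 o55 mulr1.
have o00 : a 0 0 = 1 by rewrite -o22 d22 o11 z10 z01 mulr0 subr0 mulr1.
by case=> [|[|[|[|[|[|[|k]]]]]]].
Qed.

Lemma vanish_row6 : [/\ a 5 0 = 0, a 5 1 = 0, a 5 2 = 0 & a 5 3 = 0].
Proof.
have diag := @diagonal_one.
have [z10 z20 z21 z32] := vanish_near_diagonal.
have [z30 z31 z40 z41 z42] := vanish_columns12.
have [z54 z43 z01] := vanish_via_c135.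
split; [expand 0%N 4%N 6%N | expand 1%N 4%N 6%N | expand 0%N 1%N 5%N | expand 1%N 2%N 5%N].
- exact: sub_eq0.
- exact: sub_eq0.
- done.
- done.
Qed.

Lemma vanish_row7 : [/\ a 6 2 = 0, a 6 3 = 0, a 6 4 = 0 & a 6 5 = 0].
Proof.
have diag := @diagonal_one.
have [z10 z20 z21 z32] := vanish_near_diagonal.
have [z30 z31 z40 z41 z42] := vanish_columns12.
have [z54 z43 z01] := vanish_via_c135.
have [z50 z51 z52 z53] := vanish_row6.
by split; [expand 0%N 1%N 6%N | expand 1%N 2%N 6%N | expand 2%N 3%N 6%N
          | expand 3%N 4%N 6%N].
Qed.

Lemma automorphism_entries (m k : nat) : (m < 7)%N -> (k < 7)%N ->
  (2 <= k)%N || (m < 6)%N -> a m k = (m == k)%:R.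
Proof.
have diag := @diagonal_one.
have [z10 z20 z21 z32] := vanish_near_diagonal.
have [z30 z31 z40 z41 z42] := vanish_columns12.
have [z54 z43 z01] := vanish_via_c135.
have [z50 z51 z52 z53] := vanish_row6.
have [z62 z63 z64 z65] := vanish_row7.
move: m k; do 2![do 7?[case=> [|]]; try (move=> *; exfalso; lia)] => _ _ //= _;
by rewrite ?diag ?a_triangular.
Qed.

End Equations.
End SevenDim.

Definition nat_consts (c : sconst 7) (i j k : nat) : CC := c (inord i) (inord j) (inord k).
Definition nat_entries (A : 'M[CC]_7) (m k : nat) : CC := A (inord m) (inord k).

Lemma nat_consts_table (c : sconst 7) : in_Tprime c ->
  C_ c 1 3 4 = 0 -> C_ c 1 4 5 = 0 -> C_ c 1 5 6 = 0 -> C_ c 2 4 5 = 0 ->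
  C_ c 2 5 6 = 0 -> C_ c 1 4 6 = 0 -> C_ c 2 4 6 = 0 -> C_ c 1 3 6 = 0 ->
  forall u v k : 'I_7, c u v k = coef_val (table (nat_consts c) u v k).
Proof.
move=> cT v1 v2 v3 v4 v5 v6 v7 v8 u v k; have [anti low cons] := cT.
rewrite -{1}(inord_val u) -{1}(inord_val v) -{1}(inord_val k).
apply: table_spec => //; first by move=> i j l _ _ _; apply: anti.
- by move=> i l; apply: Tprime_sqr.
- by move=> i j l hi hj hl hmax; apply: low; rewrite !inordK.
- by move=> i l hi hl; rewrite /nat_consts cons !inordK //; apply: ltnW.
Qed.

Lemma sparse_equations (c : sconst 7) (A : 'M[CC]_7) :
  (forall u v k : 'I_7, c u v k = coef_val (table (nat_consts c) u v k)) ->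
  (forall x y : 'cV[CC]_7, A *m algmul c x y = algmul c (A *m x) (A *m y)) ->
  forall i j m, (i < 7)%N -> (j < 7)%N -> (m < 7)%N ->
  sparse_sum single7 (fun _ k => nat_entries A m k) (fun _ k => table (nat_consts c) i j k)
  = sparse_sum pairs7 (fun u v => nat_entries A u i * nat_entries A v j)
               (fun u v => table (nat_consts c) u v m).
Proof.
move=> tab A_mul i j m hi hj hm.
rewrite -sparse_single7 -sparse_pairs7.
transitivity (\sum_k A (inord m) k * c (inord i) (inord j) k).
  by apply: eq_bigr => k _; rewrite tab /nat_entries inord_val !inordK.
rewrite automorphism_coord //; apply: eq_bigr => u _; apply: eq_bigr => v _.
by rewrite tab /nat_entries !inord_val !inordK.
Qed.

Unset Implicit Arguments.
Theorem mainTheorem17 (c : sconst 7) :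
  in_Tprime c ->
  C_ c 1 3 4 = 0 -> C_ c 1 4 5 = 0 -> C_ c 1 5 6 = 0 -> C_ c 2 4 5 = 0 ->
  C_ c 2 5 6 = 0 -> C_ c 1 4 6 = 0 -> C_ c 2 4 6 = 0 -> C_ c 1 3 6 = 0 ->
  C_ c 1 3 5 * C_ c 3 5 6 * C_ c 4 6 7 != 0 ->
  forall A : 'M[CC]_7,
    is_automorphism c A <->
    exists a71 a72 : CC,
      A = 1%:M + a71 *: delta_mx (inord 6) (inord 0)
               + a72 *: delta_mx (inord 6) (inord 1).
Proof.
move=> cT v1 v2 v3 v4 v5 v6 v7 v8 params A.
have inord6 : (inord 6 : 'I_7) = ord_max by apply/val_inj; rewrite /= inordK.
rewrite inord6; split=> [[Au A_mul]|[a1 [a2 ->]]]; last exact: shear_automorphism.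
have triangular := automorphism_triangular cT A_mul.
have corner : nat_entries A 6 6 != 0.
  rewrite /nat_entries inord6; apply: unitmx_corner => // m.
  rewrite -val_eqE /= => /eqP hm; apply: triangular => //=; have := ltn_ord m; lia.
have triangular_nat (m k : nat) : [&& 2 <= k, k < 7 & m < k]%N -> nat_entries A m k = 0.
  by case/and3P=> hk hk7 hmk; apply: triangular; rewrite !inordK //; lia.
have entries := automorphism_entries
  (sparse_equations (nat_consts_table cT v1 v2 v3 v4 v5 v6 v7 v8) A_mul)
  triangular_nat params corner.
exists (A ord_max (inord 0)), (A ord_max (inord 1)); apply: shear_of_entries => m k hmk.
have -> : A m k = nat_entries A m k by rewrite /nat_entries !inord_val.
rewrite entries //.
move: hmk; rewrite -val_eqE /= => /orP[-> //|/eqP hm]; have := ltn_ord m; lia.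
Qed.
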